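(* Let $G$ be a graph that has a canonical dominating set, let $D_s,D_t$ be dominating sets of $G$, and let $k=\max\{|D_s|,|D_t|\}$. Then $D_s\leftrightarrow_k D_t$ holds if and only if, for every $i\in\{s,t\}$ with $|D_i|=k$, the set $D_i$ is not a minimal dominating set.
   Context: All graphs are finite, simple and undirected. A set $D\subseteq V(G)$ is a dominating set if every vertex of $G$ is in $D$ or adjacent to a vertex of $D$; it is minimal if no proper subset $D\setminus\{w\}$, $w\in D$, is a dominating set. Two dominating sets $D,D'$ of $G$ are adjacent if $|D\triangle D'|=1$. For dominating sets $D_p,D_q$ and an integer $k>0$, write $D_p\leftrightarrow_k D_q$ if there is a sequence $D_0=D_p,D_1,\dots,D_\ell=D_q$ ($\ell\ge 0$) of dominating sets of $G$ with $D_{i-1},D_i$ adjacent for all $i\ge1$ and $|D_i|\le k$ for all $i$. A minimum dominating set $D^*$ of $G$ is called canonical if $D\leftrightarrow_{|D|+1} D^*$ holds for every dominating set $D$ of $G$. *)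

From mathcomp Require Import all_boot.
Set Implicit Arguments. Unset Strict Implicit. Unset Printing Implicit Defensive.

Definition simple_graph (T : finType) (e : rel T) : Prop :=
  symmetric e /\ irreflexive e.

Definition dominating (T : finType) (e : rel T) (D : {set T}) : Prop :=
  forall v : T, v \in D \/ exists2 u, u \in D & e v u.

Definition minimal_dominating (T : finType) (e : rel T) (D : {set T}) : Prop :=
  dominating e D /\ forall w, w \in D -> ~ dominating e (D :\ w).

Definition minimum_dominating (T : finType) (e : rel T) (D : {set T}) : Prop :=
  dominating e D /\ forall D', dominating e D' -> #|D| <= #|D'|.

Definition set_adj (T : finType) (D D' : {set T}) : bool :=
  #|(D :\: D') :|: (D' :\: D)| == 1.

(* D_p <->_k D_q : a sequence D_0 = D_p, D_1, ..., D_l = D_q (l >= 0) of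
   dominating sets, consecutive ones adjacent, all of size <= k. *)
Definition reconf (T : finType) (e : rel T) (k : nat) (Dp Dq : {set T}) : Prop :=
  exists s : seq {set T},
    [/\ path (@set_adj T) Dp s, last Dp s = Dq,
        (forall D, D \in Dp :: s -> dominating e D) &
        (forall D, D \in Dp :: s -> #|D| <= k)].

Definition canonical_dominating (T : finType) (e : rel T) (Ds : {set T}) : Prop :=
  minimum_dominating e Ds /\
  forall D, dominating e D -> reconf e (#|D| + 1) D Ds.

(* A minimal dominating set D with |D| = k has no neighbour in the
   reconfiguration graph with size at most k: adding a vertex exceeds k and
   removing one destroys domination; applied at both ends of a walk (walks
   reverse), this gives necessity.  Conversely, a dominating set D with
   |D| < k reaches the canonical set within the budget |D| + 1 <= k, and one
   with |D| = k that is not minimal first drops a redundant vertex and then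
   proceeds the same way; the two walks are glued through the canonical set. *)
From mathcomp Require Import all_boot.
From Stdlib Require Import Classical.
Set Implicit Arguments. Unset Strict Implicit. Unset Printing Implicit Defensive.

Section Adjacency.
Variable T : finType.
Implicit Types D : {set T}.

Lemma set_adjC D D' : set_adj D D' = set_adj D' D.
Proof. by rewrite /set_adj setUC. Qed.

Lemma set_adjP D D' :
  set_adj D D' -> exists x, forall y, (y \in D') = (y \in D) (+) (y == x).
Proof.
rewrite /set_adj => /cards1P [x Hx]; exists x => y.
have := congr1 (fun A : {set T} => y \in A) Hx; rewrite /= !inE => <-.
by case: (y \in D); case: (y \in D').
Qed.

Lemma set_adj_cases D D' : set_adj D D' ->
  exists x, (x \notin D /\ D' = x |: D) \/ (x \in D /\ D' = D :\ x).
Proof.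
move=> /set_adjP [x HD']; exists x.
case Dx: (x \in D); [right | left]; split=> //; apply/setP => y;
  rewrite HD' !inE; case: (y =P x) => [-> | _]; rewrite ?Dx //= ?addbF ?addbT ?andbT //.
Qed.

Lemma set_adj_delete D x : x \in D -> set_adj D (D :\ x).
Proof.
move=> Dx; rewrite /set_adj.
suff -> : D :\: (D :\ x) :|: (D :\ x) :\: D = [set x] by rewrite cards1.
apply/setP => y; rewrite !inE.
by case: (y =P x) => [-> | _] /=; [rewrite Dx | case: (y \in D)].
Qed.

End Adjacency.

Section Reconfiguration.
Variables (T : finType) (e : rel T).
Implicit Types D : {set T}.

Lemma reconf_leq k k' D D' : k <= k' -> reconf e k D D' -> reconf e k' D D'.
Proof.
by move=> le_kk' [s [Ps Ls domS cardS]]; exists s; split=> // D0 /cardS/leq_trans; apply.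
Qed.

Lemma reconf_adj k D D' : set_adj D D' -> dominating e D -> dominating e D' ->
  #|D| <= k -> #|D'| <= k -> reconf e k D D'.
Proof.
move=> adjDD' domD domD' cardD cardD'; exists [:: D']; split=> /=.
- by rewrite adjDD'.
- by [].
- by move=> D0; rewrite !inE => /orP [] /eqP ->.
- by move=> D0; rewrite !inE => /orP [] /eqP ->.
Qed.

Lemma reconf_trans k D1 D2 D3 :
  reconf e k D1 D2 -> reconf e k D2 D3 -> reconf e k D1 D3.
Proof.
move=> [s1 [P1 L1 dom1 card1]] [s2 [P2 L2 dom2 card2]].
have memS D : D \in D1 :: s1 ++ s2 -> D \in D1 :: s1 \/ D \in D2 :: s2.
  by rewrite -cat_cons mem_cat => /orP [|s2D]; [left | right; rewrite inE s2D orbT].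
exists (s1 ++ s2); split.
- by rewrite cat_path P1 L1 P2.
- by rewrite last_cat L1.
- by move=> D /memS [/dom1 | /dom2].
- by move=> D /memS [/card1 | /card2].
Qed.

Lemma reconf_sym k D1 D2 : reconf e k D1 D2 -> reconf e k D2 D1.
Proof.
case=> s; case/lastP: s => [|s D] [Ps Ls domS cardS].
  by exists [::]; rewrite -Ls.
rewrite /= last_rcons in Ls; subst D.
have memS D : D \in D2 :: rev (D1 :: s) -> D \in D1 :: rcons s D2.
  by rewrite inE mem_rev -rcons_cons mem_rcons inE => /orP [->|->]; rewrite ?orbT.
exists (rev (D1 :: s)); split.
- have := rev_path (@set_adj T) D1 (rcons s D2); rewrite last_rcons belast_rcons => ->.
  by rewrite (@eq_path _ _ (@set_adj T)) // => D D'; rewrite /= set_adjC.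
- by rewrite rev_cons last_rcons.
- by move=> D /memS /domS.
- by move=> D /memS /cardS.
Qed.

Lemma minimal_dominating_adj_card D D' : minimal_dominating e D ->
  set_adj D D' -> dominating e D' -> #|D| < #|D'|.
Proof.
move=> [_ minD] /set_adj_cases [x [[Dx ->] | [Dx ->]]] domD'.
- by rewrite cardsU1 Dx.
- by case: (minD x Dx domD').
Qed.

Lemma reconf_from_minimal k D D' : reconf e k D D' -> D <> D' ->
  #|D| = k -> ~ minimal_dominating e D.
Proof.
case=> -[|D1 s] [Ps Ls domS cardS] neqDD' cardD minD; first exact: neqDD'.
have /andP [adjD _] := Ps.
have /(minimal_dominating_adj_card minD adjD) : dominating e D1.
  by apply: domS; rewrite !inE eqxx orbT.
by rewrite cardD ltnNge cardS // !inE eqxx orbT.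
Qed.

Lemma not_minimal_dominating D : dominating e D -> ~ minimal_dominating e D ->
  exists2 w, w \in D & dominating e (D :\ w).
Proof.
move=> domD notmin; apply: NNPP => noW; apply: notmin; split=> // w Dw domDw.
by apply: noW; exists w.
Qed.

Lemma reconf_to_canonical Dc D k : canonical_dominating e Dc -> dominating e D ->
  #|D| <= k -> (#|D| = k -> ~ minimal_dominating e D) -> reconf e k D Dc.
Proof.
move=> [_ toDc] domD; rewrite leq_eqVlt => /orP [/eqP cardD | ltDk] notmin.
  have [w Dw domDw] := not_minimal_dominating domD (notmin cardD).
  have cardDw : #|D :\ w| + 1 = k by rewrite -cardD (cardsD1 w D) Dw addnC.
  apply: reconf_trans (_ : reconf e k (D :\ w) Dc).
    by apply: reconf_adj; rewrite ?set_adj_delete ?cardD -?cardDw ?leq_addr.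
  by rewrite -cardDw; apply: toDc.
by apply: reconf_leq (toDc D domD); rewrite addn1.
Qed.

End Reconfiguration.

Theorem lemma2 (T : finType) (e : rel T) (Hg : simple_graph e)
  (Hcan : exists Dc : {set T}, canonical_dominating e Dc)
  (Ds Dt : {set T}) (HDs : dominating e Ds) (HDt : dominating e Dt)
  (Hneq : Ds <> Dt) :
  let k := maxn #|Ds| #|Dt| in
  reconf e k Ds Dt <->
  ((#|Ds| = k -> ~ minimal_dominating e Ds) /\
   (#|Dt| = k -> ~ minimal_dominating e Dt)).
Proof.
move=> k; split.
  move=> reconfST; split; first exact: reconf_from_minimal reconfST Hneq.
  by apply: reconf_from_minimal (reconf_sym reconfST) _; apply: nesym.
move=> [notminS notminT]; have [Dc canDc] := Hcan.
apply: reconf_trans (reconf_to_canonical canDc HDs (leq_maxl _ _) notminS) _.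
exact/reconf_sym/(reconf_to_canonical canDc HDt (leq_maxr _ _) notminT).
Qed.
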